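(* Let $k$ be a field and $A$ a $k$-algebra. The universal map of affine schemes $\mathrm{Spec}(A)\to\mathrm{Spec}(A^\circ)$ induces a homeomorphism $|\mathrm{Spec}(A^\circ)|\simeq\pi_0(|\mathrm{Spec}(A)|)$, where the set of connected components $\pi_0(|\mathrm{Spec}(A)|)$ carries the quotient topology from $|\mathrm{Spec}(A)|$ (which is profinite).
   Context: A Stone $k$-algebra is an object of the full subcategory $\mathrm{CAlg}_k^{\mathrm{Stone}}\subseteq\mathrm{CAlg}_k$ generated under filtered colimits by the algebras $k^S=\bigoplus_S k$, $S$ finite. The forgetful functor $\mathrm{CAlg}_k^{\mathrm{Stone}}\to\mathrm{CAlg}_k$ has a right adjoint $A\mapsto A^\circ$ (the pearl of $A$): $A^\circ\to A$ is terminal among $k$-algebra maps from Stone $k$-algebras to $A$. $|\mathrm{Spec}(A)|$ is the underlying Zariski topological space. *)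

From HB Require Import structures.
From mathcomp Require Import all_boot all_order all_algebra generic_quotient.
From mathcomp Require Import all_classical all_reals.
From mathcomp Require Import topology_structure connected separation_axioms
  compact quotient_topology.
Set Implicit Arguments. Unset Strict Implicit. Unset Printing Implicit Defensive.
Import Order.TTheory GRing.Theory.
Local Open Scope classical_set_scope.
Local Open Scope ring_scope.
Local Open Scope quotient_scope.

(* Commutative k-algebras (possibly the zero ring): a commutative ring with  *)
(* a ring morphism from k.                                                   *)
Record kalg (k : fieldType) := KAlg {
  kcar :> comPzRingType;
  kstr : {rmorphism k -> kcar} }.

Definition kalg_hom (k : fieldType) (B A : kalg k) (f : B -> A) : Prop :=
  [/\ forall x y : B, f (x + y) = f x + f y,
      forall x y : B, f (x * y) = f x * f y,
      f 1 = 1 &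
      forall c : k, f (kstr B c) = kstr A c].

(* B is isomorphic (as a k-algebra) to k^S = \prod_S k for a finite set S;  *)
(* finite sets are represented up to bijection by 'I_n.                     *)
Definition iso_kfin (k : fieldType) (B : kalg k) : Prop :=
  exists (n : nat) (phi : B -> {ffun 'I_n -> k}),
    [/\ bijective phi,
        forall x y : B, phi (x + y) = phi x + phi y,
        forall x y : B, phi (x * y) = phi x * phi y,
        phi 1 = 1 &
        forall c : k, phi (kstr B c) = [ffun => c]].

Record precat := Precat {
  Ob : Type;
  Hom : Ob -> Ob -> Type;
  idm : forall a, Hom a a;
  cmp : forall a b c, Hom b c -> Hom a b -> Hom a c;
  cmp_id_l : forall a b (u : Hom a b), cmp (idm b) u = u;
  cmp_id_r : forall a b (u : Hom a b), cmp u (idm a) = u;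
  cmp_assoc : forall a b c d (u : Hom a b) (v : Hom b c) (w : Hom c d),
      cmp w (cmp v u) = cmp (cmp w v) u }.

Definition filtered (C : precat) : Prop :=
  [/\ inhabited (Ob C),
      forall a b : Ob C, exists c, exists (u : Hom a c) (v : Hom b c), True &
      forall (a b : Ob C) (u v : Hom a b),
        exists c, exists w : Hom b c, cmp w u = cmp w v].

Definition kdiagram (k : fieldType) (C : precat) (D : Ob C -> kalg k)
  (F : forall a b, Hom a b -> D a -> D b) : Prop :=
  [/\ forall a b (u : Hom a b), kalg_hom (F a b u),
      forall a (x : D a), F a a (idm a) x = x &
      forall a b c (u : Hom a b) (v : Hom b c) (x : D a),
        F a c (cmp v u) x = F b c v (F a b u x)].

Definition kcocone (k : fieldType) (C : precat) (D : Ob C -> kalg k)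
  (F : forall a b, Hom a b -> D a -> D b) (B : kalg k)
  (g : forall a, D a -> B) : Prop :=
  (forall a, kalg_hom (g a)) /\
  (forall a b (u : Hom a b) (x : D a), g b (F a b u x) = g a x).

Definition kcolimit (k : fieldType) (C : precat) (D : Ob C -> kalg k)
  (F : forall a b, Hom a b -> D a -> D b) (B : kalg k)
  (g : forall a, D a -> B) : Prop :=
  kcocone F g /\
  forall (E : kalg k) (h : forall a, D a -> E), kcocone F h ->
    exists u : B -> E,
      [/\ kalg_hom u, (forall a (x : D a), u (g a x) = h a x) &
          forall u' : B -> E, kalg_hom u' ->
            (forall a (x : D a), u' (g a x) = h a x) -> forall x, u' x = u x].

Inductive Stone (k : fieldType) : kalg k -> Prop :=
| Stone_fin (B : kalg k) : iso_kfin B -> Stone B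
| Stone_colim (C : precat) (D : Ob C -> kalg k)
    (F : forall a b, Hom a b -> D a -> D b) (B : kalg k)
    (g : forall a, D a -> B) :
    filtered C -> kdiagram F -> kcolimit F g ->
    (forall a, Stone (D a)) -> Stone B.

(* eps : P -> A exhibits P as the pearl A° of A: P is Stone and eps is     *)
(* terminal among k-algebra maps from Stone k-algebras to A.               *)
Definition is_pearl (k : fieldType) (A P : kalg k) (eps : P -> A) : Prop :=
  [/\ Stone P, kalg_hom eps &
      forall (B : kalg k) (phi : B -> A), Stone B -> kalg_hom phi ->
        exists psi : B -> P,
          [/\ kalg_hom psi, (forall x, eps (psi x) = phi x) &
              forall psi' : B -> P, kalg_hom psi' ->
                (forall x, eps (psi' x) = phi x) -> forall x, psi' x = psi x]].

Record prime_ideal (R : comPzRingType) (p : set R) : Prop := {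
  pi_0 : p 0;
  pi_B : forall x y, p x -> p y -> p (x - y);
  pi_M : forall a x, p x -> p (a * x);
  pi_1 : ~ p 1;
  pi_P : forall x y, p (x * y) -> p x \/ p y }.

Definition Spec (R : comPzRingType) : Type := {p : set R | prime_ideal p}.

HB.instance Definition _ (R : comPzRingType) := gen_eqMixin (Spec R).
HB.instance Definition _ (R : comPzRingType) := gen_choiceMixin (Spec R).

Definition zopen (R : comPzRingType) : set_system (Spec R) :=
  [set U | exists S : set R, U = [set q : Spec R | ~ (S `<=` proj1_sig q)]].

Lemma zopenT (R : comPzRingType) : @zopen R setT.
Proof.
exists setT; apply/seteqP; split => q //= _ HS.
by apply: (pi_1 (proj2_sig q)); apply: HS.
Qed.

Lemma zopenI (R : comPzRingType) : setI_closed (@zopen R).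
Proof.
move=> U1 U2 [S1 ->] [S2 ->].
exists [set x | exists a b, [/\ S1 a, S2 b & x = a * b]].
apply/seteqP; split => q /=.
- move=> [H1 H2] H; apply: H1 => a Sa; apply: contrapT => na.
  apply: H2 => b Sb; apply: contrapT => nb.
  have : proj1_sig q (a * b) by apply: H; exists a, b.
  by case/(pi_P (proj2_sig q)).
- move=> H; split => Hs; apply: H => x [a [b [Sa Sb ->]]].
  + by rewrite mulrC; apply: (pi_M (proj2_sig q)); apply: Hs.
  + by apply: (pi_M (proj2_sig q)); apply: Hs.
Qed.

Lemma zopen_bigU (R : comPzRingType) (I : Type) (f : I -> set (Spec R)) :
  (forall i, @zopen R (f i)) -> @zopen R (\bigcup_i f i).
Proof.
move=> hf; have /choice [S hS] := hf.
exists (\bigcup_i S i); apply/seteqP; split => q /=.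
- move=> [i _]; rewrite hS /= => H H'; apply: H => x Sx; apply: H'; by exists i.
- move=> H; apply: contrapT => H'; apply: H => x [i _ Sx].
  apply: contrapT => nx; apply: H'; exists i => //; rewrite hS /= => H2.
  by apply: nx; apply: H2.
Qed.

HB.instance Definition _ (R : comPzRingType) :=
  isOpenTopological.Build (Spec R) (@zopenT R) (@zopenI R) (@zopen_bigU R).

Definition same_component (T : topologicalType) (x y : T) : bool :=
  `[< connected_component setT x y >].

Lemma same_component_refl (T : topologicalType) :
  reflexive (@same_component T).
Proof. by move=> x; apply/asboolP; apply: connected_component_refl. Qed.

Lemma same_component_sym (T : topologicalType) :
  symmetric (@same_component T).
Proof.
by move=> x y; apply/asboolP/asboolP => /connected_component_sym.
Qed.

Lemma same_component_trans (T : topologicalType) :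
  transitive (@same_component T).
Proof.
move=> y x z /asboolP Hxy /asboolP Hyz; apply/asboolP.
exact: connected_component_trans Hxy Hyz.
Qed.

Definition component_rel (T : topologicalType) : equiv_rel T :=
  EquivRel (@same_component T) (@same_component_refl T)
    (@same_component_sym T) (@same_component_trans T).

Definition pi0 (T : topologicalType) : topologicalType :=
  quotient_topology {eq_quot (@component_rel T)}.

Definition pi0_proj (T : topologicalType) : T -> pi0 T :=
  \pi_{eq_quot (@component_rel T)}.

Definition profinite (T : topologicalType) : Prop :=
  [/\ compact [set: T], hausdorff_space T & totally_disconnected [set: T]].

Definition homeomorphism (S T : topologicalType) (h : S -> T) : Prop :=
  continuous h /\
  exists g : T -> S, [/\ cancel h g, cancel g h & continuous g].

(* Every element of a Stone k-algebra is a k-linear combination of idempotents: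
   this holds for k^S, and the subalgebra of such combinations receives every
   cocone, so it exhausts any colimit.  Hence a prime of the pearl P is
   determined by the idempotents it contains, and Spec P is zero-dimensional,
   hence Hausdorff.  Idempotents of A are the k-algebra maps k x k -> A and
   k x k is Stone, so eps is a bijection on idempotents.  Thus two primes of A
   have the same image in Spec P iff they contain the same idempotents.  The set
   of primes containing the idempotents of a prime q is connected: a splitting
   of it into relatively clopen pieces cut out by T and T' is also cut out by
   an idempotent f (the product T T' is nilpotent modulo the idempotents of q,
   and a binomial expansion splits off f), and f or 1 - f lies in q.  So the
   fibres of Spec eps are the connected components; Spec eps is onto by Krull's
   lemma, and the induced continuous bijection from pi_0(Spec A), compact as
   Spec A is, onto the Hausdorff Spec P is a homeomorphism. *)

From HB Require Import structures.
From mathcomp Require Import all_boot all_order all_algebra generic_quotient finmap.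
From mathcomp Require Import all_classical all_reals.
From mathcomp Require Import topology_structure connected separation_axioms
  compact quotient_topology subspace_topology.
From mathcomp Require Import ring.
Set Implicit Arguments. Unset Strict Implicit. Unset Printing Implicit Defensive.
Import GRing.Theory.
Local Open Scope classical_set_scope.
Local Open Scope ring_scope.

Definition idem (R : comPzRingType) (e : R) : Prop := e * e = e.

Section Idempotents.
Variable R : comPzRingType.
Implicit Types e f : R.

Lemma idem0 : idem (0 : R). Proof. by rewrite /idem mulr0. Qed.

Lemma idem1 : idem (1 : R). Proof. by rewrite /idem mulr1. Qed.

Lemma idemM e f : idem e -> idem f -> idem (e * f).
Proof. by rewrite /idem => he hf; rewrite mulrACA he hf. Qed.

Lemma idem_compl e : idem e -> idem (1 - e).
Proof. by rewrite /idem => he; rewrite mulrBl mul1r mulrBr mulr1 he subrr subr0. Qed.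

(* [e + f - e * f] is the join of [e] and [f] in the Boolean algebra of
   idempotents. *)
Lemma idem_join e f : idem e -> idem f -> idem (e + f - e * f).
Proof.
rewrite /idem => he hf.
have -> : (e + f - e * f) * (e + f - e * f) =
  e * e + f * f + (e * e) * (f * f) + (e * f) *+ 2
  - ((e * e) * f) *+ 2 - (e * (f * f)) *+ 2 by ring.
by rewrite he hf; ring.
Qed.

Lemma idemX e n : idem e -> e ^+ n.+1 = e.
Proof. by move=> he; elim: n => [|n IH]; rewrite ?expr1 // exprS IH he. Qed.

Lemma absorb_joinl (z e f : R) : z * e = z -> z * (e + f - e * f) = z.
Proof. by move=> ze; rewrite mulrBr mulrDr mulrA ze; ring. Qed.

Lemma absorb_joinr (z e f : R) : z * f = z -> z * (e + f - e * f) = z.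
Proof. by move=> zf; rewrite [e * f]mulrC [e + f]addrC absorb_joinl. Qed.

End Idempotents.

Section KalgHom.
Variables (k : fieldType) (B C A : kalg k).

Lemma kalg_hom0 (f : B -> A) : kalg_hom f -> f 0 = 0.
Proof.
by case=> fD _ _ _; apply: (@addrI _ (f 0)); rewrite -fD !addr0.
Qed.

Lemma kalg_homB (f : B -> A) x y : kalg_hom f -> f (x - y) = f x - f y.
Proof.
move=> hf; have [fD _ _ _] := hf.
by apply: (@addIr _ (f y)); rewrite -fD !subrK.
Qed.

Lemma kalg_hom_idem (f : B -> A) e : kalg_hom f -> idem e -> idem (f e).
Proof. by case=> _ fM _ _; rewrite /idem -fM => ->. Qed.

Lemma kalg_hom_comp (f : B -> C) (g : C -> A) :
  kalg_hom f -> kalg_hom g -> kalg_hom (g \o f).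
Proof.
case=> fD fM f1 fk [gD gM g1 gk].
by split => /= [x y|x y||c]; rewrite ?(fD, gD, fM, gM, f1, g1, fk, gk).
Qed.

End KalgHom.

Inductive idem_comb (k : fieldType) (B : kalg k) : B -> Prop :=
| idem_comb0 : idem_comb 0
| idem_combS (c : k) (e x : B) :
    idem e -> idem_comb x -> idem_comb (kstr B c * e + x).

Section IdemComb.
Variables (k : fieldType) (B : kalg k).
Implicit Types x y : B.

Lemma idem_combD x y : idem_comb x -> idem_comb y -> idem_comb (x + y).
Proof.
elim=> [|c e x' he _ IH] hy; first by rewrite add0r.
by rewrite -addrA; apply: idem_combS => //; apply: IH.
Qed.

Lemma idem_combZ (c : k) x : idem_comb x -> idem_comb (kstr B c * x).
Proof.
elim=> [|d e x' he _ IH]; first by rewrite mulr0; apply: idem_comb0.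
by rewrite mulrDr mulrA -rmorphM; apply: idem_combS.
Qed.

Lemma idem_comb_mul_idem (f : B) x : idem f -> idem_comb x -> idem_comb (x * f).
Proof.
move=> hf; elim=> [|d e x' he _ IH]; first by rewrite mul0r; apply: idem_comb0.
by rewrite mulrDl -mulrA; apply: idem_combS => //; apply: idemM.
Qed.

Lemma idem_combM x y : idem_comb x -> idem_comb y -> idem_comb (x * y).
Proof.
move=> hx; elim=> [|d e y' he _ IH]; first by rewrite mulr0; apply: idem_comb0.
rewrite mulrDr; apply: idem_combD => //.
by rewrite mulrCA; apply: idem_combZ; apply: idem_comb_mul_idem.
Qed.

Lemma idem_comb_scalar (c : k) : idem_comb (kstr B c).
Proof.
rewrite -[kstr B c]addr0 -[kstr B c]mulr1.
by apply: idem_combS; [apply: idem1 | apply: idem_comb0].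
Qed.

Lemma idem_combN x : idem_comb x -> idem_comb (- x).
Proof. by move=> hx; rewrite -mulN1r -(rmorphN1 (kstr B)); apply: idem_combZ. Qed.

Lemma idem_comb_hom (A : kalg k) (f : B -> A) x :
  kalg_hom f -> idem_comb x -> idem_comb (f x).
Proof.
move=> hf; elim=> [|c e x' he _ IH]; first by rewrite (kalg_hom0 hf); apply: idem_comb0.
have [fD fM _ fk] := hf.
by rewrite fD fM fk; apply: idem_combS => //; apply: kalg_hom_idem.
Qed.

End IdemComb.

(* In k^n, x is the combination of the coordinate idempotents with weights x i. *)
Lemma iso_kfin_idem_comb (k : fieldType) (B : kalg k) :
  iso_kfin B -> forall x : B, idem_comb x.
Proof.
case=> n [phi [[psi phiK psiK] phiD phiM _ phik]] x.
have psiD a b : psi (a + b) = psi a + psi b by apply: (can_inj phiK); rewrite phiD !psiK.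
have psiM a b : psi (a * b) = psi a * psi b by apply: (can_inj phiK); rewrite phiM !psiK.
have psi0 : psi 0 = 0 by apply: (@addrI _ (psi 0)); rewrite -psiD !addr0.
have psik c : psi [ffun => c] = kstr B c by rewrite -phik phiK.
pose delta (i : 'I_n) : {ffun 'I_n -> k} := [ffun j => (j == i)%:R].
have phi_sum : phi x = \sum_(i < n) [ffun => phi x i] * delta i.
  apply/ffunP => j; rewrite sum_ffunE (bigD1 j) //= big1 ?addr0 => [|i /negPf ij].
    by rewrite !ffunE eqxx mulr1.
  by rewrite !ffunE eq_sym ij mulr0.
rewrite -[x]phiK phi_sum (big_morph psi psiD psi0).
apply: big_ind => [|y z|i _]; [exact: idem_comb0 | exact: idem_combD |].
rewrite psiM psik -[_ * _]addr0; apply: idem_combS; last exact: idem_comb0.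
rewrite /idem -psiM; congr psi; apply/ffunP => j; rewrite !ffunE.
by case: (j == i); rewrite ?mulr1 ?mulr0.
Qed.

Section IdemCombSubalgebra.
Variables (k : fieldType) (B : kalg k).

Definition idem_combp : {pred B} := fun x => `[< idem_comb x >].

Lemma idem_combpP (x : B) : reflect (idem_comb x) (x \in idem_combp).
Proof. by rewrite unfold_in; apply: asboolP. Qed.

Lemma idem_combp_subring_closed : GRing.subring_closed idem_combp.
Proof.
split; first by apply/idem_combpP; rewrite -(rmorph1 (kstr B)); apply: idem_comb_scalar.
  move=> x y /idem_combpP hx /idem_combpP hy; apply/idem_combpP.
  by apply: idem_combD => //; apply: idem_combN.
by move=> x y /idem_combpP hx /idem_combpP hy; apply/idem_combpP; apply: idem_combM.
Qed.

Definition idem_comb_sub := {x : B | x \in idem_combp}.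
HB.instance Definition _ :=
  [isSub for (@sval B (fun x => x \in idem_combp)) : idem_comb_sub -> B].
HB.instance Definition _ := [Choice of idem_comb_sub by <:].
HB.instance Definition _ := GRing.SubChoice_isSubComPzRing.Build B idem_combp
  idem_comb_sub idem_combp_subring_closed.

Definition idem_comb_scalar_sub (c : k) : idem_comb_sub :=
  exist _ (kstr B c) (introT (idem_combpP _) (idem_comb_scalar B c)).

Lemma idem_comb_scalar_sub_zmod : zmod_morphism idem_comb_scalar_sub.
Proof. by move=> x y; apply: val_inj; rewrite /= !rmorphB. Qed.

Lemma idem_comb_scalar_sub_monoid : monoid_morphism idem_comb_scalar_sub.
Proof.
by split=> [|x y]; apply: val_inj; rewrite /= ?rmorph1 ?rmorphM.
Qed.

HB.instance Definition _ := GRing.isZmodMorphism.Build k idem_comb_sub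
  idem_comb_scalar_sub idem_comb_scalar_sub_zmod.
HB.instance Definition _ := GRing.isMonoidMorphism.Build k idem_comb_sub
  idem_comb_scalar_sub idem_comb_scalar_sub_monoid.

Definition idem_comb_kalg : kalg k := KAlg idem_comb_scalar_sub.

Lemma idem_comb_val_hom : kalg_hom (fun x : idem_comb_kalg => val x : B).
Proof. by split => /= [x y|x y||c]; rewrite ?rmorphD ?rmorphM ?rmorph1. Qed.

End IdemCombSubalgebra.

(* The subalgebra of idempotent combinations receives the colimit cocone, so
   by uniqueness in the universal property it is the whole colimit. *)
Lemma Stone_idem_comb (k : fieldType) (B : kalg k) :
  Stone B -> forall x : B, idem_comb x.
Proof.
elim=> [B0 /iso_kfin_idem_comb // | C D F B0 g _ _ [[g_hom g_comm] g_univ] _ IH] x.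
pose h a (y : D a) : idem_comb_kalg B0 :=
  exist _ (g a y) (introT (idem_combpP _) (idem_comb_hom (g_hom a) (IH a y))).
have h_cocone : kcocone F h.
  split => [a|a b u y]; last by apply: val_inj; rewrite /= g_comm.
  have [gD gM g1 gk] := g_hom a.
  by split => [y z|y z||c]; apply: val_inj; rewrite /= ?gD ?gM ?g1 ?gk.
have [u [u_hom u_comm _]] := g_univ _ h h_cocone.
have [v [_ _ v_uniq]] := g_univ _ g (conj g_hom g_comm).
have -> : x = val (u x).
  rewrite [LHS](v_uniq id) ?(v_uniq (fun x => val (u x))) //.
  - exact: kalg_hom_comp u_hom (idem_comb_val_hom B0).
  - by move=> a y /=; rewrite u_comm.
by apply/idem_combpP; apply: valP.
Qed.

Record ideal (R : comPzRingType) (J : set R) : Prop := {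
  ideal0 : J 0;
  idealB : forall x y, J x -> J y -> J (x - y);
  idealM : forall a x, J x -> J (a * x) }.

Definition ideal_gen (R : comPzRingType) (S : set R) : set R :=
  fun x => forall J, ideal J -> S `<=` J -> J x.

Section Ideals.
Variable R : comPzRingType.
Implicit Types (S J : set R) (x y : R).

Lemma idealN J x : ideal J -> J x -> J (- x).
Proof. by move=> hJ Jx; rewrite -sub0r; apply: idealB => //; apply: ideal0. Qed.

Lemma idealD J x y : ideal J -> J x -> J y -> J (x + y).
Proof. by move=> hJ Jx Jy; rewrite -[y]opprK; apply: idealB => //; apply: idealN. Qed.

Lemma ideal_gen_ideal S : ideal (ideal_gen S).
Proof.
split=> [J hJ _|x y gx gy J hJ SJ|a x gx J hJ SJ]; first exact: ideal0.
  by apply: idealB => //; [apply: gx | apply: gy].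
by apply: idealM => //; apply: gx.
Qed.

Lemma sub_ideal_gen S : S `<=` ideal_gen S.
Proof. by move=> x Sx J _; apply. Qed.

Lemma ideal_gen_min S J : ideal J -> S `<=` J -> ideal_gen S `<=` J.
Proof. by move=> hJ SJ x; apply. Qed.

Lemma ideal_gen_mono S S' : S `<=` S' -> ideal_gen S `<=` ideal_gen S'.
Proof. by move=> SS' x gx J hJ S'J; apply: gx => // y /SS'/S'J. Qed.

Lemma prime_ideal_ideal (p : set R) : prime_ideal p -> ideal p.
Proof. by case. Qed.

Lemma prime_idem_or (p : set R) e : prime_ideal p -> idem e -> p e \/ p (1 - e).
Proof. by move=> hp he; apply: (pi_P hp); rewrite mulrBr mulr1 he subrr; apply: pi_0. Qed.

Lemma prime_idem_nand (p : set R) e : prime_ideal p -> p e -> p (1 - e) -> False.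
Proof.
move=> hp pe p1e; apply: (pi_1 hp).
by rewrite -(subrK e 1); apply: idealD => //; apply: prime_ideal_ideal.
Qed.

Lemma prime_join (p : set R) e f : prime_ideal p -> p e -> p f -> p (e + f - e * f).
Proof.
move=> /prime_ideal_ideal hp pe pf.
by apply: (idealB hp); [apply: idealD | apply: idealM].
Qed.

End Ideals.

Section Krull.
Variables (R : comPzRingType) (S : set R) (s : R).

Definition avoiding (J : set R) : Prop :=
  [/\ ideal J, S `<=` J & forall n, ~ J (s ^+ n)].

Lemma avoiding_bigcup (F : set (set R)) : F `<=` avoiding ->
  total_on F subset -> F !=set0 -> avoiding (\bigcup_(J in F) J).
Proof.
move=> Fav Ftot [J0 FJ0]; split.
- split=> [|x y [J1 F1 x1] [J2 F2 y2]|a x [J1 F1 x1]].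
  + by exists J0 => //; case: (Fav _ FJ0) => -[].
  + have [J12|J21] := Ftot _ _ F1 F2.
    * by exists J2 => //; case: (Fav _ F2) => -[_ hB _] _ _; apply: hB => //; apply: J12.
    * by exists J1 => //; case: (Fav _ F1) => -[_ hB _] _ _; apply: hB => //; apply: J21.
  + by exists J1 => //; case: (Fav _ F1) => -[_ _ hM] _ _; apply: hM.
- by move=> x Sx; exists J0 => //; case: (Fav _ FJ0) => _ SJ _; apply: SJ.
- by move=> n [J FJ Jn]; case: (Fav _ FJ) => _ _ nJ; apply: (nJ n).
Qed.

Lemma exists_max_avoiding : (forall n, ~ ideal_gen S (s ^+ n)) ->
  exists M, avoiding M /\ forall J, M `<` J -> ~ avoiding J.
Proof.
move=> gen_av.
(* Zorn_bigcup also covers the empty chain, whose union is set0. *)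
have [M [M0_av Mmax]] :
    exists M, (M = set0 \/ avoiding M) /\ forall J, M `<` J -> ~ (J = set0 \/ avoiding J).
  apply: Zorn_bigcup => F FP Ftot.
  have [[J [FJ J_av]]|noav] := pselect (exists J, F J /\ avoiding J); last first.
    left; apply/seteqP; split => // x [J FJ Jx].
    by case: (FP _ FJ) => [J0|J_av]; [rewrite J0 in Jx | case: noav; exists J].
  right; have -> : \bigcup_(J in F) J = \bigcup_(J in F `&` avoiding) J.
    apply/seteqP; split => x [J' FJ' J'x]; last by exists J' => //; case: FJ'.
    by case: (FP _ FJ') => [J'0|J'_av]; [rewrite J'0 in J'x | exists J'].
  apply: avoiding_bigcup => [J1 []//||]; last by exists J.
  by move=> J1 J2 [F1 _] [F2 _]; apply: Ftot.
exists M; split => [|J MJ J_av]; last by apply: (Mmax J MJ); right.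
case: M0_av => // M0; case: (Mmax (ideal_gen S)); last first.
  by right; split; [exact: ideal_gen_ideal | exact: sub_ideal_gen | exact: gen_av].
rewrite M0; split; first exact: sub0set.
by move=> /(_ 0 (ideal0 (ideal_gen_ideal S))).
Qed.

Lemma max_avoiding_prime M :
  avoiding M -> (forall J, M `<` J -> ~ avoiding J) -> prime_ideal M.
Proof.
move=> [iM SM nM] Mmax.
have extend x : ~ M x -> exists n m r, M m /\ s ^+ n = m + r * x.
  move=> Mx; pose Mx_ideal := [set z | exists m r, M m /\ z = m + r * x].
  have iMx : ideal Mx_ideal.
    split=> [|a b [m [r [Mm ->]]] [m' [r' [Mm' ->]]]|a z [m [r [Mm ->]]]].
    - by exists 0, 0; rewrite mul0r addr0; split => //; apply: ideal0.
    - by exists (m - m'), (r - r'); split; [apply: idealB | ring].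
    - by exists (a * m), (a * r); split; [apply: idealM | ring].
  have MMx : M `<=` Mx_ideal by move=> z Mz; exists z, 0; rewrite mul0r addr0.
  apply: contrapT => nosn; apply: (Mmax Mx_ideal).
    split => // MxM; apply: Mx; apply: MxM.
    by exists 0, 1; rewrite mul1r add0r; split => //; apply: ideal0.
  by split => // [z /SM/MMx | n [m [r [Mm sn]]]] //; apply: nosn; exists n, m, r.
split; [exact: ideal0 | exact: idealB | exact: idealM | |].
  by move=> M1; apply: (nM 0); rewrite expr0.
move=> x y Mxy; apply: contrapT => /not_orP [Mx My].
have [n [m [r [Mm sn]]]] := extend _ Mx.
have [n' [m' [r' [Mm' sn']]]] := extend _ My.
apply: (nM (n + n')); rewrite exprD sn sn'.
have -> : (m + r * x) * (m' + r' * y) =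
  (m' + r' * y) * m + (r * x * m' + (r * r') * (x * y)) by ring.
by apply: idealD => //; [apply: idealM | apply: idealD => //; apply: idealM].
Qed.

Lemma exists_prime_avoiding : (forall n, ~ ideal_gen S (s ^+ n)) ->
  exists p : Spec R, S `<=` sval p /\ ~ sval p s.
Proof.
move=> /exists_max_avoiding [M [M_av Mmax]].
have pM := max_avoiding_prime M_av Mmax.
case: M_av => _ SM nM.
by exists (exist _ M pM); split => //= Ms; apply: (nM 1); rewrite expr1.
Qed.

End Krull.

Lemma exists_prime_over (R : comPzRingType) (S : set R) :
  ~ ideal_gen S 1 -> exists p : Spec R, S `<=` sval p.
Proof.
move=> nS; have [|p [Sp _]] := @exists_prime_avoiding R S 1; last by exists p.
by move=> n; rewrite expr1n.
Qed.

Section IdealAlgebra.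
Variable R : comPzRingType.

Lemma ideal_genU (S1 S2 : set R) z : ideal_gen (S1 `|` S2) z ->
  exists a b, [/\ ideal_gen S1 a, ideal_gen S2 b & z = a + b].
Proof.
have g1 := ideal_gen_ideal S1; have g2 := ideal_gen_ideal S2.
pose J := [set z : R | exists a b, [/\ ideal_gen S1 a, ideal_gen S2 b & z = a + b]].
move: z; apply: (@ideal_gen_min _ _ J); first split.
- by exists 0, 0; rewrite addr0; split => //; [apply: (ideal0 g1) | apply: (ideal0 g2)].
- move=> _ _ [a [b [ga gb ->]]] [a' [b' [ga' gb' ->]]].
  by exists (a - a'), (b - b'); split; [apply: (idealB g1) | apply: (idealB g2) | ring].
- move=> c _ [a [b [ga gb ->]]].
  by exists (c * a), (c * b); split; [apply: (idealM g1) | apply: (idealM g2) | ring].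
move=> w [S1w|S2w].
- by exists w, 0; rewrite addr0; split => //; [apply: sub_ideal_gen | apply: (ideal0 g2)].
- by exists 0, w; rewrite add0r; split => //; [apply: (ideal0 g1) | apply: sub_ideal_gen].
Qed.

Lemma ideal_gen_idem_absorb (S : set R) : S 0 ->
  (forall e f, S e -> S f -> S (e + f - e * f)) -> (forall e, S e -> idem e) ->
  forall z, ideal_gen S z -> exists2 e, S e & z * e = z.
Proof.
move=> S0 S_join S_idem.
apply: (@ideal_gen_min _ _ [set z | exists2 e, S e & z * e = z]); last first.
  by move=> e Se; exists e => //; apply: S_idem.
split=> [|x y [e Se xe] [f Sf yf]|a x [e Se xe]]; first by exists 0 => //; rewrite mul0r.
  by exists (e + f - e * f); [apply: S_join | rewrite mulrBl absorb_joinl ?absorb_joinr].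
by exists e => //; rewrite -mulrA xe.
Qed.

Lemma exprDn_split (x y : R) m a b : (a + b <= m.+1)%N ->
  exists u v, (x + y) ^+ m = x ^+ a * u + y ^+ b * v.
Proof.
elim: m a b => [|m IH] [|a] [|b] ab.
- by exists 1, 0; rewrite !expr0 mulr1 mulr0 addr0.
- by exists 1, 0; rewrite !expr0 mulr1 mulr0 addr0.
- by exists 0, 1; rewrite !expr0 mulr0 mulr1 add0r.
- by rewrite addSn ltnS addnS ltn0 in ab.
- by exists ((x + y) ^+ m.+1), 0; rewrite expr0 mul1r mulr0 addr0.
- by exists ((x + y) ^+ m.+1), 0; rewrite expr0 mul1r mulr0 addr0.
- by exists 0, ((x + y) ^+ m.+1); rewrite expr0 mul1r mulr0 add0r.
rewrite addSn ltnS in ab.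
have [u [v e1]] := IH a b.+1 ab.
have ab' : (a.+1 + b <= m.+1)%N by rewrite addSn -addnS.
have [u' [v' e2]] := IH a.+1 b ab'.
exists (u + y * u'), (x * v + v').
by rewrite exprS mulrDl {1}e1 e2 !exprS; ring.
Qed.

(* With X = x E and Y = y E we have X + Y = E and (X Y)^(n+1) = 0, so expanding
   E = (X + Y)^(2n+1) splits E into orthogonal summands X^(n+1) u + Y^(n+1) v. *)
Lemma idem_split (x y E : R) n : idem E -> (x + y) * E = E ->
  (x * y) ^+ n * E = 0 -> exists a b, idem (x * a) /\ x * a + y * b = E.
Proof.
move=> hE xyE xyn.
pose X := x * E; pose Y := y * E.
have XYE : X + Y = E by rewrite -mulrDl.
have XYN : (X * Y) ^+ n.+1 = 0.
  have -> : X * Y = (x * y) * E by rewrite /X /Y mulrACA hE.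
  by rewrite exprMn (idemX n hE) exprS -mulrA xyn mulr0.
have [u [v E_split]] : exists u v, (X + Y) ^+ (n + n.+1) = X ^+ n.+1 * u + Y ^+ n.+1 * v.
  by apply: exprDn_split; rewrite addSn.
rewrite XYE addnS (idemX _ hE) in E_split.
have XE : X * E = X by rewrite /X -mulrA hE.
have fE : X ^+ n.+1 * u * E = X ^+ n.+1 * u.
  by rewrite mulrAC exprSr -(mulrA _ X E) XE.
have fg : X ^+ n.+1 * u * (Y ^+ n.+1 * v) = 0 by rewrite mulrACA -exprMn XYN mul0r.
exists (E * X ^+ n * u), (E * Y ^+ n * v); split.
  have -> : x * (E * X ^+ n * u) = X ^+ n.+1 * u by rewrite exprS /X; ring.
  by move: fE; rewrite {1}E_split mulrDr fg addr0.
by rewrite {3}E_split exprS exprS /X /Y; ring.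
Qed.

End IdealAlgebra.

Section ZariskiTopology.
Variable R : comPzRingType.

Lemma Spec_val_inj : injective (sval : Spec R -> set R).
Proof. by move=> [p1 hp1] [p2 hp2] /= p12; apply: eq_exist. Qed.

Lemma Spec_openP (U : set (Spec R)) :
  open U -> exists T : set R, U = [set q | ~ T `<=` sval q].
Proof. by []. Qed.

Lemma Spec_closedP (C : set (Spec R)) :
  closed C -> exists T : set R, C = [set q | T `<=` sval q].
Proof.
rewrite -openC => /Spec_openP [T CT]; exists T.
rewrite -[C]setCK CT; apply/seteqP; split => q /=; first exact: contrapT.
by move=> Tq; apply.
Qed.

Lemma Spec_cover_compact : cover_compact [set: Spec R].
Proof.
move=> I D U U_open U_cover.
have /choice [T UT] : forall i, exists T : set R,
    D i -> U i = [set q : Spec R | ~ T `<=` sval q].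
  move=> i; have [Di|nDi] := pselect (D i); last by exists set0 => /nDi.
  by have [T ->] := Spec_openP (U_open i Di); exists T.
pose W (D' : set I) : set R := \bigcup_(i in D') T i.
pose Fin : set R := fun z =>
  exists2 D' : {fset I}, {subset D' <= D} & ideal_gen (W [set` D']) z.
have Fin_ideal : ideal Fin.
  have W_mono (D1 D2 : set I) : D1 `<=` D2 -> ideal_gen (W D1) `<=` ideal_gen (W D2).
    by move=> D12; apply: ideal_gen_mono => w [i /D12 D2i Tiw]; exists i.
  split=> [|x y [D1 D1D x1] [D2 D2D y2]|a x [D1 D1D x1]].
  - by exists fset0 => //; apply: (ideal0 (ideal_gen_ideal _)).
  - exists (D1 `|` D2)%fset; first by move=> i; rewrite in_fsetU => /orP [/D1D|/D2D].
    apply: (idealB (ideal_gen_ideal _)); [move: x1 | move: y2]; apply: W_mono => i /=;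
      by rewrite in_fsetU => ->; rewrite ?orbT.
  - by exists D1 => //; apply: (idealM (ideal_gen_ideal _)).
have [D' D'D Fin1] : Fin 1.
  apply: contrapT => nFin1.
  have [p Wp] : exists p : Spec R, W D `<=` sval p.
    apply: exists_prime_over => gen1; apply: nFin1.
    move: gen1; apply: ideal_gen_min => // z [i Di Tiz]; exists [fset i]%fset.
      by move=> j; rewrite in_fset1 => /eqP ->; apply/mem_set.
    by apply: sub_ideal_gen; exists i => //=; rewrite in_fset1.
  have [i Di] : cover D U p by apply: U_cover.
  by rewrite (UT i Di) /=; apply => z Tiz; apply: Wp; exists i.
exists D' => // r _; apply: contrapT => nr; have r_prime := proj2_sig r.
apply: (pi_1 r_prime); move: Fin1; apply: ideal_gen_min.
  exact: prime_ideal_ideal.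
move=> z [i D'i Tiz]; apply: contrapT => nz; apply: nr; exists i => //.
have Di : D i by have := D'D _ D'i; rewrite inE.
by rewrite (UT i Di) => /= Tir; apply: nz; apply: Tir.
Qed.

(* compact_cover needs a pointed space, hence the copy of Spec R pointed at t. *)
Definition pointed_Spec (t : Spec R) : Type := Spec R.
HB.instance Definition _ (t : Spec R) := Topological.copy (pointed_Spec t) (Spec R).
HB.instance Definition _ (t : Spec R) := isPointed.Build (pointed_Spec t) t.

Lemma Spec_compact : compact [set: Spec R].
Proof.
have [[t _]|empty] := pselect (exists t : Spec R, True).
  by rewrite (@compact_cover (pointed_Spec t)); apply: Spec_cover_compact.
suff -> : [set: Spec R] = set0 by apply: compact0.
by apply/seteqP; split => // t _; apply: empty; exists t.
Qed.

Definition zero_locus (e : R) : set (Spec R) := [set r | sval r e].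

Lemma zero_locus_clopen (e : R) : idem e -> clopen (zero_locus e).
Proof.
move=> he; split.
  exists [set 1 - e]; apply/seteqP; split => r /=.
    by move=> re /(_ _ erefl); apply: prime_idem_nand (proj2_sig r) re.
  move=> r1e; have [//|r1e'] := prime_idem_or (proj2_sig r) he.
  by case: r1e => _ ->.
rewrite -openC; exists [set e]; apply/seteqP; split => r /=.
  by move=> nre /(_ _ erefl).
by move=> nre re; apply: nre => _ ->.
Qed.

End ZariskiTopology.

Section IdemHull.
Variables (R : comPzRingType) (q : Spec R).

Definition idems_in : set R := [set e | idem e /\ sval q e].

(* The intersection of the clopen sets zero_locus e containing q. *)
Definition idem_hull : set (Spec R) := [set r | idems_in `<=` sval r].

Lemma idem_hull_refl : idem_hull q.
Proof. by move=> e []. Qed.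

Lemma ideal_gen_idems_in_absorb z :
  ideal_gen idems_in z -> exists2 e, idems_in e & z * e = z.
Proof.
have q_prime := proj2_sig q.
apply: ideal_gen_idem_absorb => [|e f [he qe] [hf qf]|e []//].
  by split; [apply: idem0 | apply: pi_0].
by split; [apply: idem_join | apply: prime_join].
Qed.

Lemma idem_hull_clopen_idem (T T' : set R) :
  (forall r, idem_hull r -> T `<=` sval r \/ T' `<=` sval r) ->
  (forall r, idem_hull r -> T `<=` sval r -> T' `<=` sval r -> False) ->
  exists2 f, idem f & forall r, idem_hull r -> (T `<=` sval r <-> sval r f).
Proof.
move=> TT'_cover TT'_disj.
have [i [z [gi [x [y [gx gy ->]]] i_xy]]] :
    exists i z, [/\ ideal_gen idems_in i, exists x y,
      [/\ ideal_gen T x, ideal_gen T' y & z = x + y] & 1 = i + z].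
  have [|i [z [gi + ->]]] := @ideal_genU _ idems_in (T `|` T') 1.
    apply: contrapT => /exists_prime_over [r r_sup].
    by apply: (TT'_disj r) => w ?; apply: r_sup; [left | right; left | right; right].
  by move=> /ideal_genU gz; exists i, z.
(* x y lies in every prime of idem_hull, so by Krull it is nilpotent modulo
   the idempotents of q. *)
have [n gxy] : exists n, ideal_gen idems_in ((x * y) ^+ n).
  apply: contrapT => ngxy.
  have [|r [r_hull nxy]] := @exists_prime_avoiding R idems_in (x * y).
    by move=> n gn; apply: ngxy; exists n.
  have r_prime := proj2_sig r; have r_ideal := prime_ideal_ideal r_prime.
  have [Tr|T'r] := TT'_cover r r_hull; apply: nxy.
    by rewrite mulrC; apply: (pi_M r_prime); apply: (ideal_gen_min r_ideal Tr gx).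
  by apply: (pi_M r_prime); apply: (ideal_gen_min r_ideal T'r gy).
have [e1 [he1 qe1] ie1] := ideal_gen_idems_in_absorb gi.
have [e2 [he2 qe2] xye2] := ideal_gen_idems_in_absorb gxy.
pose e := e1 + e2 - e1 * e2.
have he : idem e by apply: idem_join.
have xyE : (x + y) * (1 - e) = 1 - e.
  have ie : i * e = i by apply: absorb_joinl.
  have -> : x + y = 1 - i by rewrite i_xy addrAC subrr add0r.
  by rewrite mulrBl mul1r mulrBr mulr1 ie subrr subr0.
have xyn : (x * y) ^+ n * (1 - e) = 0 by rewrite mulrBr mulr1 absorb_joinr // subrr.
have [a [b [hxa xayb]]] := idem_split (idem_compl he) xyE xyn.
exists (x * a) => // r r_hull; have r_prime := proj2_sig r.
have r_ideal := prime_ideal_ideal r_prime.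
split=> [Tr|ra]; first by rewrite mulrC; apply: idealM (ideal_gen_min r_ideal Tr gx).
have [//|T'r] := TT'_cover r r_hull; exfalso.
have re : sval r e by apply: r_hull; split => //; exact: prime_join (proj2_sig q) qe1 qe2.
apply: (pi_1 r_prime); rewrite -(subrK e 1) -xayb.
apply: idealD => //; apply: idealD => //; rewrite mulrC.
exact: idealM (ideal_gen_min r_ideal T'r gy).
Qed.

Lemma idem_hull_connected : connected idem_hull.
Proof.
move=> B [r0 Br0] [U /Spec_openP [T' ->] BU] [C /Spec_closedP [T ->] BC].
have [f hf fT] :
    exists2 f, idem f & forall r, idem_hull r -> (T `<=` sval r <-> sval r f).
  apply: (@idem_hull_clopen_idem T T') => [r r_hull|r r_hull Tr T'r].
    have [T'r|nT'r] := pselect (T' `<=` sval r); [by right | left].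
    have : B r by rewrite BU.
    by rewrite BC => -[].
  have : B r by rewrite BC.
  by rewrite BU => -[_]; apply.
have [r0_hull T_r0] : idem_hull r0 /\ T `<=` sval r0 by move: Br0; rewrite BC.
have [qf|q1f] := prime_idem_or (proj2_sig q) hf.
  rewrite BC; apply/seteqP; split => [r [] //|r r_hull]; split => //.
  by apply/(fT r r_hull); apply: r_hull.
exfalso; apply: (prime_idem_nand (proj2_sig r0)).
  exact/(fT r0 r0_hull).
by apply: r0_hull; split => //; apply: idem_compl.
Qed.

End IdemHull.

Section SpecMap.
Variables (k : fieldType) (B A : kalg k) (f : B -> A) (f_hom : kalg_hom f).

Lemma prime_ideal_preimage (q : set A) : prime_ideal q -> prime_ideal (f @^-1` q).
Proof.
have [fD fM f1 _] := f_hom; move=> q_prime; split.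
- by rewrite /preimage /= (kalg_hom0 f_hom); apply: pi_0.
- by move=> x y qx qy; rewrite /preimage /= (kalg_homB _ _ f_hom); apply: pi_B.
- by move=> a x qx; rewrite /preimage /= fM; apply: pi_M.
- by rewrite /preimage /= f1; apply: pi_1.
- by move=> x y; rewrite /preimage /= fM; apply: pi_P.
Qed.

Definition Spec_map (q : Spec A) : Spec B :=
  exist _ (f @^-1` sval q) (prime_ideal_preimage (proj2_sig q)).

Lemma Spec_map_continuous : continuous Spec_map.
Proof.
apply/continuousP => _ /Spec_openP [T ->]; exists (f @` T).
apply/seteqP; split => q /= nT fTq; apply: nT.
- by move=> y Ty; apply: fTq; exists y.
- by move=> _ [x Tx <-]; apply: fTq.
Qed.

End SpecMap.

Lemma prime_scalar_eq0 (k : fieldType) (B : kalg k) (p : set B) (c : k) :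
  prime_ideal p -> p (kstr B c) -> c = 0.
Proof.
move=> p_prime pc; apply: contrapT => /eqP c_neq0; apply: (pi_1 p_prime).
by rewrite -(rmorph1 (kstr B)) -(mulVf c_neq0) rmorphM; apply: pi_M.
Qed.

Section IdempotentSpan.
Variables (k : fieldType) (B : kalg k).
Hypothesis B_comb : forall x : B, idem_comb x.

Lemma idem_comb_common_residue (p1 p2 : Spec B) :
  (forall e, idem e -> sval p1 e -> sval p2 e) ->
  forall x, idem_comb x -> exists c, sval p1 (x - kstr B c) /\ sval p2 (x - kstr B c).
Proof.
move=> p12; have p1_prime := proj2_sig p1; have p2_prime := proj2_sig p2.
have p1_ideal := prime_ideal_ideal p1_prime; have p2_ideal := prime_ideal_ideal p2_prime.
move=> x0; elim=> [|d e x he _ [c [p1x p2x]]].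
  by exists 0; rewrite rmorph0 subrr; split; apply: pi_0.
have [p1e|p1e'] := prime_idem_or p1_prime he.
  exists c; rewrite -addrA; split; apply: idealD => //; apply: idealM => //.
  exact: p12.
exists (d + c).
have -> : kstr B d * e + x - kstr B (d + c) = - kstr B d * (1 - e) + (x - kstr B c).
  by rewrite rmorphD; ring.
split; apply: idealD => //; apply: idealM => //.
by apply: p12 => //; apply: idem_compl.
Qed.

Lemma Spec_eq_idem (p1 p2 : Spec B) :
  (forall e, idem e -> sval p1 e -> sval p2 e) -> p1 = p2.
Proof.
move=> p12; apply: Spec_val_inj; apply/seteqP.
have p1_prime := proj2_sig p1; have p2_prime := proj2_sig p2.
suff sub (r1 r2 : Spec B) : (forall e, idem e -> sval r1 e -> sval r2 e) ->
    sval r1 `<=` sval r2.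
  split; apply: sub => // e he p2e; apply: contrapT => np1e.
  have [//|p11e] := prime_idem_or p1_prime he.
  exact: prime_idem_nand p2_prime p2e (p12 _ (idem_compl he) p11e).
move=> r12 x r1x; have [c [r1xc r2xc]] := idem_comb_common_residue r12 (B_comb x).
have r1_prime := proj2_sig r1; have r2_prime := proj2_sig r2.
suff c0 : c = 0 by move: r2xc; rewrite c0 rmorph0 subr0.
apply: (prime_scalar_eq0 r1_prime).
have -> : kstr B c = x - (x - kstr B c) by rewrite opprB addrCA subrr addr0.
exact: pi_B.
Qed.

Lemma Spec_zero_dimensional : zero_dimensional (Spec B).
Proof.
move=> p1 p2 /eqP p12.
have [e [he p1e np2e]] : exists e, [/\ idem e, sval p1 e & ~ sval p2 e].
  apply: contrapT => nsep; apply: p12; apply: Spec_eq_idem => e he p1e.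
  by apply: contrapT => np2e; apply: nsep; exists e.
by exists (zero_locus e); split => //; apply: zero_locus_clopen.
Qed.

End IdempotentSpan.

Section SquareAlgebra.
Variable k : fieldType.

Definition diag_k (c : k) : k * k := (c, c).

Lemma diag_k_zmod : zmod_morphism diag_k. Proof. by []. Qed.
Lemma diag_k_monoid : monoid_morphism diag_k. Proof. by []. Qed.

HB.instance Definition _ := GRing.isZmodMorphism.Build k (k * k)%type diag_k diag_k_zmod.
HB.instance Definition _ :=
  GRing.isMonoidMorphism.Build k (k * k)%type diag_k diag_k_monoid.

Definition kk : kalg k := KAlg diag_k.

Lemma kk_Stone : Stone kk.
Proof.
apply: Stone_fin; exists 2.
exists (fun ab : kk => [ffun i : 'I_2 => if i == ord0 then ab.1 else ab.2]).
have i01 (i : 'I_2) : i = ord0 \/ i = ord_max.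
  by case: i => [[|[|m]] hm]; [left|right|by []]; apply: val_inj.
split=> [|x y|x y||c]; try by apply/ffunP => i; rewrite !ffunE; case: (i == ord0).
exists (fun f : {ffun 'I_2 -> k} => (f ord0, f ord_max)) => [[a b]|f].
  by rewrite /= !ffunE.
by apply/ffunP => i; rewrite ffunE /=; case: (i01 i) => ->.
Qed.

(* Idempotents e of B correspond to k-algebra maps kk -> B, via (1, 0) |-> e. *)
Definition kk_idem_hom (B : kalg k) (e : B) : kk -> B :=
  fun ab => kstr B ab.1 * e + kstr B ab.2 * (1 - e).

Lemma kk_idem_hom_kalg_hom (B : kalg k) (e : B) : idem e -> kalg_hom (kk_idem_hom e).
Proof.
rewrite /idem => he; split => [[a b] [c d]|[a b] [c d]||c]; rewrite /kk_idem_hom /=.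
- by rewrite !rmorphD; ring.
- rewrite !rmorphM.
  have -> : (kstr B a * e + kstr B b * (1 - e)) * (kstr B c * e + kstr B d * (1 - e)) =
    kstr B a * kstr B c * (e * e) + kstr B b * kstr B d * (1 - e *+ 2 + e * e)
    + (kstr B a * kstr B d + kstr B b * kstr B c) * (e - e * e) by ring.
  by rewrite he; ring.
- by rewrite rmorph1 !mul1r subrKC.
- by rewrite -mulrDr subrKC mulr1.
Qed.

Lemma kk_idem_hom10 (B : kalg k) (e : B) : kk_idem_hom e (1, 0) = e.
Proof. by rewrite /kk_idem_hom /= rmorph1 rmorph0 mul1r mul0r addr0. Qed.

Lemma kalg_hom_kk_idem_hom (B A : kalg k) (f : B -> A) (e : B) :
  kalg_hom f -> forall x, f (kk_idem_hom e x) = kk_idem_hom (f e) x.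
Proof.
move=> f_hom [a b]; have [fD fM f1 fk] := f_hom.
by rewrite /kk_idem_hom /= fD !fM !fk (kalg_homB _ _ f_hom) f1.
Qed.

End SquareAlgebra.

Section Pearl.
Variables (k : fieldType) (A P : kalg k) (eps : P -> A).
Hypothesis eps_pearl : is_pearl eps.

Lemma pearl_kalg_hom : kalg_hom eps.
Proof. by case: eps_pearl. Qed.

Lemma pearl_idem_comb (x : P) : idem_comb x.
Proof. by case: eps_pearl => P_Stone _ _; apply: Stone_idem_comb. Qed.

Lemma pearl_idem_lift (e : A) : idem e -> exists2 e' : P, idem e' & eps e' = e.
Proof.
case: eps_pearl => _ _ univ he.
have [psi [psi_hom psi_eps _]] := univ _ _ (kk_Stone k) (kk_idem_hom_kalg_hom he).
exists (psi (1, 0)); last by rewrite psi_eps kk_idem_hom10.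
apply: (kalg_hom_idem psi_hom).
by rewrite /idem; congr pair; rewrite /= (mulr1, mulr0).
Qed.

Lemma pearl_idem_inj (e1 e2 : P) : idem e1 -> idem e2 -> eps e1 = eps e2 -> e1 = e2.
Proof.
case: eps_pearl => _ eps_hom univ he1 he2 e12.
have he := kalg_hom_idem eps_hom he1.
have [psi [_ _ psi_uniq]] := univ _ _ (kk_Stone k) (kk_idem_hom_kalg_hom he).
rewrite -(kk_idem_hom10 e1) -(kk_idem_hom10 e2).
rewrite (psi_uniq _ (kk_idem_hom_kalg_hom he1)) ?(psi_uniq _ (kk_idem_hom_kalg_hom he2)) //.
  by move=> x; rewrite kalg_hom_kk_idem_hom // e12.
by move=> x; rewrite kalg_hom_kk_idem_hom.
Qed.

Local Notation pi := (Spec_map pearl_kalg_hom).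

Lemma Spec_pearl_surj (p : Spec P) : exists q, pi q = p.
Proof.
have p_prime := proj2_sig p; have eps_hom := pearl_kalg_hom.
have [eD eM eps1 _] := eps_hom.
pose S := eps @` idems_in p.
have S_absorb : forall z, ideal_gen S z -> exists2 e, S e & z * e = z.
  apply: ideal_gen_idem_absorb => [|_ _ [e [he pe] <-] [f [hf pf] <-]|_ [e [he _] <-]].
  - by exists 0; [split; [apply: idem0 | apply: pi_0] | apply: kalg_hom0].
  - exists (e + f - e * f); first by split; [apply: idem_join | apply: prime_join].
    by rewrite (kalg_homB _ _ eps_hom) eD eM.
  - exact: kalg_hom_idem.
have [q Sq] : exists q : Spec A, S `<=` sval q.
  apply: exists_prime_over => /S_absorb [_ [e [he pe] <-]].
  rewrite mul1r -eps1 => /(pearl_idem_inj he (idem1 P)) e1.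
  by apply: (pi_1 p_prime); rewrite -e1.
exists q; apply: (Spec_eq_idem pearl_idem_comb) => e he /= qe.
apply: contrapT => npe; have [//|p1e] := prime_idem_or p_prime he.
apply: (prime_idem_nand (proj2_sig q) qe).
rewrite -eps1 -(kalg_homB _ _ eps_hom).
by apply: Sq; exists (1 - e) => //; split => //; apply: idem_compl.
Qed.

Lemma Spec_pearl_fiber (q q' : Spec A) :
  pi q = pi q' <-> connected_component setT q q'.
Proof.
split=> [pq|qq'].
  apply: (connected_component_max (B := idem_hull q)) => //.
  - exact: idem_hull_refl.
  - exact: idem_hull_connected.
  move=> e [he qe]; have [e' he' eps_e'] := pearl_idem_lift he.
  by move: qe; rewrite -eps_e' -[sval q (eps e')]/(sval (pi q) e') pq.
have comp_connected : connected (pi @` connected_component setT q).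
  apply: connected_continuous_connected; first exact: component_connected.
  exact/continuous_subspaceT/Spec_map_continuous.
have Spec_P_disc := zero_dimension_totally_disconnected
  (Spec_zero_dimensional pearl_idem_comb).
suff : connected_component setT (pi q) (pi q') by rewrite Spec_P_disc.
apply: (connected_component_max (B := pi @` connected_component setT q)).
- by exists q => //; apply: connected_component_refl.
- by [].
- exact: comp_connected.
- by exists q'.
Qed.

End Pearl.

Lemma zero_dimensional_hausdorff (T : topologicalType) :
  zero_dimensional T -> hausdorff_space T.
Proof.
move=> T_zd; rewrite open_hausdorff => x y /T_zd [U [[oU cU] Ux nUy]].
exists (U, ~` U); first by split; rewrite /= inE.
by split => //=; [rewrite openC | rewrite setICr].
Qed.

Lemma zero_dimensional_inj (S T : topologicalType) (f : S -> T) :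
  continuous f -> injective f -> zero_dimensional T -> zero_dimensional S.
Proof.
move=> f_cont f_inj T_zd x y xy.
have /T_zd [U [U_clopen Ufx nUfy]] : f x != f y by apply: contra_neq xy => /f_inj.
by exists (f @^-1` U); split => //; apply: preimage_clopen.
Qed.

Lemma continuous_inverse_compact (S T : topologicalType) (f : S -> T) (g : T -> S) :
  compact [set: S] -> hausdorff_space T -> continuous f ->
  cancel f g -> cancel g f -> continuous g.
Proof.
move=> S_compact T_hausdorff f_cont fK gK; apply/continuous_closedP => C C_closed.
have -> : g @^-1` C = f @` C.
  apply/seteqP; split => [t Cgt|_ [s Cs <-]]; last by rewrite /preimage /= fK.
  by exists (g t) => //; rewrite gK.
apply: compact_closed => //; apply: continuous_compact.
  exact: continuous_subspaceT.
exact: subclosed_compact C_closed S_compact _.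
Qed.

Section Pi0.
Variable T : topologicalType.

Lemma pi0_reprK (z : pi0 T) : pi0_proj (repr z) = z.
Proof. exact: reprK. Qed.

Lemma pi0_proj_eq (x y : T) :
  pi0_proj x = pi0_proj y <-> connected_component setT x y.
Proof. by split => [/eqquotP/asboolP|xy]; last by apply/eqquotP/asboolP. Qed.

Lemma pi0_compact : compact [set: T] -> compact [set: pi0 T].
Proof.
move=> T_compact.
have -> : [set: pi0 T] = @pi0_proj T @` [set: T].
  by apply/seteqP; split => // z _; exists (repr z) => //; apply: pi0_reprK.
apply: continuous_compact T_compact.
exact/continuous_subspaceT/pi_continuous.
Qed.

Lemma pi0_lift_homeomorphism (U : topologicalType) (f : T -> U) :
  compact [set: T] -> hausdorff_space U -> continuous f ->
  (forall u, exists x, f x = u) ->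
  (forall x y, f x = f y <-> connected_component setT x y) ->
  homeomorphism (fun z : pi0 T => f (repr z)).
Proof.
move=> T_compact U_hausdorff f_cont f_surj f_fiber.
have /choice [s sK] := f_surj.
pose h (z : pi0 T) := f (repr z).
have h_proj x : h (pi0_proj x) = f x.
  by apply/f_fiber/pi0_proj_eq; rewrite pi0_reprK.
have hK : cancel h (@pi0_proj T \o s).
  by move=> z /=; rewrite -[RHS]pi0_reprK; apply/pi0_proj_eq/f_fiber; rewrite sK.
have sK' : cancel (@pi0_proj T \o s) h by move=> u /=; rewrite h_proj sK.
have h_cont : continuous h.
  by apply/quotient_continuous; rewrite (_ : h \o _ = f) //; apply: funext.
split => //; exists (@pi0_proj T \o s); split => //.
exact: continuous_inverse_compact (pi0_compact T_compact) U_hausdorff h_cont hK sK'.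
Qed.

End Pi0.

Unset Implicit Arguments.

Theorem proposition1p12 (k : fieldType) (A P : kalg k) (eps : P -> A) :
  is_pearl eps ->
  profinite (pi0 (Spec A)) /\
  exists h : pi0 (Spec A) -> Spec P,
    (forall q : Spec A, proj1_sig (h (pi0_proj q)) = eps @^-1` proj1_sig q) /\
    homeomorphism h.
Proof.
move=> eps_pearl; pose pi := Spec_map (pearl_kalg_hom eps_pearl).
have Spec_P_zd := Spec_zero_dimensional (pearl_idem_comb eps_pearl).
have pi_cont : continuous pi by apply: Spec_map_continuous.
have h_homeo := pi0_lift_homeomorphism (@Spec_compact A)
  (zero_dimensional_hausdorff Spec_P_zd) pi_cont
  (Spec_pearl_surj eps_pearl) (Spec_pearl_fiber eps_pearl).
have [h_cont [g [hK _ _]]] := h_homeo.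
have pi0_zd := zero_dimensional_inj h_cont (can_inj hK) Spec_P_zd.
split.
  split; first exact: pi0_compact (@Spec_compact A).
    exact: zero_dimensional_hausdorff.
  exact: zero_dimension_totally_disconnected.
exists (fun z => pi (repr z)); split => // q.
suff -> : pi (repr (pi0_proj q)) = pi q by [].
by apply/(Spec_pearl_fiber eps_pearl)/pi0_proj_eq; rewrite pi0_reprK.
Qed.
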